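(* Let $R_1,R_2$ be commutative rings with nonzero identity, $I_1$ an ideal of $R_1$, $I_2$ an ideal of $R_2$, $R=R_1\times R_2$ and $I=I_1\times I_2$. Let $x\in R_1\setminus I_1$ and $y\in R_2\setminus I_2$. Then for every $a\in I_1$ and $b\in I_2$, the vertex $(x,b)$ is adjacent to the vertex $(a,y)$ in $\Gamma''_I(R)$.
   Context: $R_1\times R_2$ has componentwise operations. For a commutative ring $S$ and an ideal $J$ of $S$, $\Gamma''_J(S)$ is the simple undirected graph whose vertex set is $\{x\in S\setminus J : xS+J\neq S\}$, with distinct vertices $x,y$ adjacent if and only if $x\notin yS+J$ and $y\notin xS+J$. *)

From mathcomp Require Import all_boot all_algebra.
Set Implicit Arguments. Unset Strict Implicit. Unset Printing Implicit Defensive.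
Import GRing.Theory.
Local Open Scope ring_scope.

(* Subsets of a ring are Prop-valued predicates (rings may be infinite). *)

Definition is_ideal (S : comNzRingType) (J : S -> Prop) : Prop :=
  [/\ J 0,
      (forall a b, J a -> J b -> J (a - b)) &
      (forall r a, J a -> J (r * a))].

Definition in_xSJ (S : comNzRingType) (J : S -> Prop) (x z : S) : Prop :=
  exists s j, J j /\ z = x * s + j.

(* vertex set of Gamma''_J(S): x \notin J and xS + J <> S *)
Definition G2_vertex (S : comNzRingType) (J : S -> Prop) (x : S) : Prop :=
  ~ J x /\ ~ (forall z, in_xSJ J x z).

Definition G2_adj (S : comNzRingType) (J : S -> Prop) (x y : S) : Prop :=
  [/\ G2_vertex J x, G2_vertex J y, x <> y,
      ~ in_xSJ J y x & ~ in_xSJ J x y].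

Definition prod_ideal (R1 R2 : comNzRingType) (I1 : R1 -> Prop) (I2 : R2 -> Prop)
  : (R1 * R2)%type -> Prop := fun p => I1 p.1 /\ I2 p.2.

From mathcomp Require Import all_boot all_algebra.
Local Open Scope ring_scope.
Import GRing.Theory.
Set Implicit Arguments.

(* Since a lies in I1, every element of (a, y)R + I has its first coordinate in
   I1, so (x, b) is not in it; symmetrically (a, y) is not in (x, b)R + I.  Two
   elements outside J, each outside the other's xS + J, are adjacent: each one
   shows that the other's xS + J is proper, and they differ since x is in xS + J. *)

Section IdealGraph.

Variables (S : comNzRingType) (J : S -> Prop).
Hypothesis idealJ : is_ideal J.

Lemma ideal_mulD r i j : J i -> J j -> J (r * i + j).
Proof.
case: idealJ => J0 JB JM Ji Jj.
by have := JB _ _ (JM r _ Ji) (JB _ _ J0 Jj); rewrite sub0r opprK.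
Qed.

Lemma in_xSJ_ideal x z : J x -> in_xSJ J x z -> J z.
Proof. by move=> Jx [s [j [Jj ->]]]; rewrite mulrC; apply: ideal_mulD. Qed.

Lemma in_xSJ_refl x : in_xSJ J x x.
Proof. by case: idealJ => J0 _ _; exists 1, 0; rewrite mulr1 addr0. Qed.

Lemma G2_vertex_of_not_in_xSJ x z : ~ J x -> ~ in_xSJ J x z -> G2_vertex J x.
Proof. by move=> Jx xz; split=> // /(_ z). Qed.

Lemma G2_adj_of_not_in_xSJ x y :
  ~ J x -> ~ J y -> ~ in_xSJ J y x -> ~ in_xSJ J x y -> G2_adj J x y.
Proof.
move=> Jx Jy yx xy; split.
- exact: G2_vertex_of_not_in_xSJ xy.
- exact: G2_vertex_of_not_in_xSJ yx.
- by move=> exy; apply: xy; rewrite -exy; apply: in_xSJ_refl.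
- exact: yx.
- exact: xy.
Qed.

End IdealGraph.

Section ProductIdeal.

Variables (R1 R2 : comNzRingType) (I1 : R1 -> Prop) (I2 : R2 -> Prop).

Lemma prod_ideal_is_ideal :
  is_ideal I1 -> is_ideal I2 -> is_ideal (prod_ideal I1 I2).
Proof.
case=> I10 I1B I1M [I20 I2B I2M]; split=> [//|a b [? ?] [? ?]|r a [? ?]].
  by split; [apply: I1B | apply: I2B].
by split; [apply: I1M | apply: I2M].
Qed.

Lemma in_xSJ_fst p z :
  in_xSJ (prod_ideal I1 I2) p z -> in_xSJ I1 p.1 z.1.
Proof. by case=> s [j [[Ij _] ->]]; exists s.1, j.1. Qed.

Lemma in_xSJ_snd p z :
  in_xSJ (prod_ideal I1 I2) p z -> in_xSJ I2 p.2 z.2.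
Proof. by case=> s [j [[_ Ij] ->]]; exists s.2, j.2. Qed.

End ProductIdeal.

Theorem lemma2p6 (R1 R2 : comNzRingType) (I1 : R1 -> Prop) (I2 : R2 -> Prop)
  (hI1 : is_ideal I1) (hI2 : is_ideal I2)
  (x : R1) (y : R2) (hx : ~ I1 x) (hy : ~ I2 y) :
  forall (a : R1) (b : R2), I1 a -> I2 b ->
    G2_adj (S := (R1 * R2)%type) (prod_ideal I1 I2) (x, b) (a, y).
Proof.
move=> a b Ia Ib.
apply: G2_adj_of_not_in_xSJ.
- exact: prod_ideal_is_ideal.
- by case.
- by case.
- by move/in_xSJ_fst/(in_xSJ_ideal hI1 Ia).
- by move/in_xSJ_snd/(in_xSJ_ideal hI2 Ib).
Qed.
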